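(* Let $A$ be a commutative ring with $1\ne0$ and let $|$ be a divisibility on $A$ that has cancellation. Then the support $I(|)$ is a prime ideal of $A$.
   Context: A divisibility on $A$ is a binary relation $|\subseteq A\times A$ such that for all $a,b,c\in A$: (1) $a|a$; (2) $a|b,\ b|c\Rightarrow a|c$; (3) $a|b,\ a|c\Rightarrow a|b-c$; (4) $a|b\Rightarrow ac|bc$; (5) $0\nmid 1$. Its support is $I(|)=\{a\in A;\ 0|a\}$ (a proper ideal). $|$ has cancellation if for all $c\in A$ with $0\nmid c$ and all $a,b\in A$, $ac|bc$ implies $a|b$. *)

From mathcomp Require Import all_boot all_algebra.
Unset Printing Implicit Defensive.
Import GRing.Theory.
Local Open Scope ring_scope.

Definition is_divisibility (A : comNzRingType) (d : A -> A -> Prop) : Prop :=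
  [/\ (forall a, d a a),
      (forall a b c, d a b -> d b c -> d a c),
      (forall a b c, d a b -> d a c -> d a (b - c)),
      (forall a b c, d a b -> d (a * c) (b * c))
    & ~ d 0 1].

Definition div_support (A : comNzRingType) (d : A -> A -> Prop) : A -> Prop :=
  fun a => d 0 a.

Definition has_cancellation (A : comNzRingType) (d : A -> A -> Prop) : Prop :=
  forall c, ~ d 0 c -> forall a b, d (a * c) (b * c) -> d a b.

Definition is_ideal (A : comNzRingType) (I : A -> Prop) : Prop :=
  [/\ I 0,
      (forall a b, I a -> I b -> I (a - b))
    & (forall r a, I a -> I (r * a))].

Definition is_prime_ideal (A : comNzRingType) (I : A -> Prop) : Prop :=
  [/\ is_ideal A I, ~ I 1
    & (forall a b, I (a * b) -> I a \/ I b)].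

From mathcomp Require Import all_boot all_algebra.
From Stdlib Require Import Classical.
Import GRing.Theory.
Local Open Scope ring_scope.

Section DivisibilitySupport.

Variables (A : comNzRingType) (d : A -> A -> Prop).
Hypothesis divd : is_divisibility A d.

Lemma div_support_ideal : is_ideal A (div_support A d).
Proof.
have [refl _ sub mul _] := divd.
split=> [|a b|r a Ia]; [exact: refl | exact: sub |].
by have := mul _ _ r Ia; rewrite mul0r mulrC.
Qed.

Lemma div_support_proper : ~ div_support A d 1.
Proof. by case: divd. Qed.

(* Since [0 = 0 * b], [0 | a * b] reads [0 * b | a * b]; cancel [b]. *)
Lemma div_support_prime_mul (cancd : has_cancellation A d) (a b : A) :
  div_support A d (a * b) -> div_support A d a \/ div_support A d b.
Proof.
move=> Iab; case: (classic (d 0 b)) => Ib; [by right | left].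
by apply: (cancd b Ib); rewrite mul0r.
Qed.

End DivisibilitySupport.

Theorem proposition2p1 (A : comNzRingType) (d : A -> A -> Prop) :
  is_divisibility A d -> has_cancellation A d ->
  is_prime_ideal A (div_support A d).
Proof.
move=> divd cancd; split.
- exact: div_support_ideal.
- exact: div_support_proper.
- exact: div_support_prime_mul.
Qed.
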